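(* Let $(X,d)$ be a metric space, $\alpha:X\times X\rightarrow[0,+\infty)$ and $T:X\rightarrow X$. Assume that $T$ is $\alpha$--admissible and $\alpha$--contractive of Meir--Keeler type. Let $x,y\in X$ with $\alpha(x,y)\geq1$. Then $\alpha(T^{n}x,T^{n}y)\geq1$ for all $n\in\mathbb{N}$, the sequence $\{d(T^{n}x,T^{n}y)\}_{n}$ is nonincreasing, and $d(T^{n}x,T^{n}y)\rightarrow0$ as $n\rightarrow\infty$.
   Context: $\mathbb{N}$ denotes the set of non-negative integers and $T^n$ is the $n$-th iterate of $T$ ($T^0$ the identity). $T$ is called an $\alpha$--contractive mapping of Meir--Keeler type if for every $\varepsilon>0$ there exists $\delta(\varepsilon)>0$ such that for all $x,y\in X$: $\varepsilon\leq d(x,y)<\varepsilon+\delta(\varepsilon)$ implies $\alpha(x,y)\,d(Tx,Ty)<\varepsilon$. $T$ is called $\alpha$--admissible if for all $x,y\in X$, $\alpha(x,y)\geq1$ implies $\alpha(Tx,Ty)\geq1$. *)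

From Stdlib Require Import Reals.
Open Scope R_scope.

Definition is_metric {X : Type} (d : X -> X -> R) : Prop :=
  (forall x y, 0 <= d x y) /\
  (forall x y, d x y = 0 <-> x = y) /\
  (forall x y, d x y = d y x) /\
  (forall x y z, d x z <= d x y + d y z).

Definition iterate {X : Type} (T : X -> X) (n : nat) (x : X) : X :=
  Nat.iter n T x.

Definition alpha_admissible {X : Type} (alpha : X -> X -> R) (T : X -> X) : Prop :=
  forall x y, alpha x y >= 1 -> alpha (T x) (T y) >= 1.

Definition alpha_MK_contractive {X : Type} (d : X -> X -> R)
    (alpha : X -> X -> R) (T : X -> X) : Prop :=
  forall eps, eps > 0 -> exists delta, delta > 0 /\
    forall x y, eps <= d x y < eps + delta -> alpha x y * d (T x) (T y) < eps.

(* Along the orbit of an admissible pair the distances d(T^n x, T^n y) do not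
   increase, so they converge to some l >= 0.  If l > 0, the Meir--Keeler
   condition at eps = l applies to every late enough pair, since its distance
   lies in [l, l + delta); the next distance is then < l, contradicting that the
   sequence stays above its limit. *)

From Stdlib Require Import Reals Lra.
Open Scope R_scope.

Lemma Un_cv_ge0 (u : nat -> R) (l : R) :
  (forall n, 0 <= u n) -> Un_cv u l -> 0 <= l.
Proof.
  intros u_ge0 u_cv.
  apply (Rle_cv_lim (Un := fun _ => 0) (Vn := u)); [exact u_ge0 | | exact u_cv].
  intros eps eps_gt0. exists 0%nat. intros n _.
  unfold R_dist. rewrite Rminus_diag, Rabs_R0. exact eps_gt0.
Qed.

Lemma alpha_admissible_iterate {X : Type} (alpha : X -> X -> R) (T : X -> X) :
  alpha_admissible alpha T ->
  forall x y, alpha x y >= 1 ->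
  forall n, alpha (iterate T n x) (iterate T n y) >= 1.
Proof.
  intros adm x y xy n. induction n as [|n IH]; simpl.
  - exact xy.
  - exact (adm _ _ IH).
Qed.

Section MeirKeeler.

Variables (X : Type) (d alpha : X -> X -> R) (T : X -> X).
Hypothesis d_ge0 : forall x y, 0 <= d x y.
Hypothesis MK : alpha_MK_contractive d alpha T.

Lemma MK_contractive_ge1 (eps : R) : eps > 0 ->
  exists delta, delta > 0 /\
    forall u v, alpha u v >= 1 -> eps <= d u v < eps + delta ->
    d (T u) (T v) < eps.
Proof.
  intros eps_gt0. destruct (MK eps eps_gt0) as [delta [delta_gt0 contr]].
  exists delta. split; [exact delta_gt0 |].
  intros u v uv_ge1 duv. specialize (contr u v duv).
  pose proof (d_ge0 (T u) (T v)). nra.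
Qed.

Lemma MK_dist_lt (u v : X) :
  alpha u v >= 1 -> 0 < d u v -> d (T u) (T v) < d u v.
Proof.
  intros uv_ge1 duv_gt0.
  destruct (MK_contractive_ge1 (d u v) duv_gt0) as [delta [delta_gt0 contr]].
  apply contr; [exact uv_ge1 | lra].
Qed.

Hypothesis d_eq0 : forall x y, d x y = 0 <-> x = y.

Lemma MK_dist_le (u v : X) : alpha u v >= 1 -> d (T u) (T v) <= d u v.
Proof.
  intros uv_ge1. destruct (Rle_lt_or_eq_dec 0 (d u v) (d_ge0 u v)) as [pos | zero].
  - left. exact (MK_dist_lt u v uv_ge1 pos).
  - assert (u = v) as <- by (apply d_eq0; auto).
    assert (d (T u) (T u) = 0) by (apply d_eq0; reflexivity). lra.
Qed.

Variables (x y : X).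
Hypothesis orbit_ge1 : forall n, alpha (iterate T n x) (iterate T n y) >= 1.

Lemma orbit_dist_decreasing :
  Un_decreasing (fun n => d (iterate T n x) (iterate T n y)).
Proof. intro n. exact (MK_dist_le _ _ (orbit_ge1 n)). Qed.

Lemma orbit_dist_cv0 : Un_cv (fun n => d (iterate T n x) (iterate T n y)) 0.
Proof.
  set (a := fun n => d (iterate T n x) (iterate T n y)).
  assert (a_lb : has_lb a).
  { exists 0. intros r [n ->]. unfold opp_seq, a.
    pose proof (d_ge0 (iterate T n x) (iterate T n y)). lra. }
  destruct (decreasing_cv a orbit_dist_decreasing a_lb) as [l a_cv].
  assert (above_l : forall n, l <= a n)
    by exact (decreasing_ineq a l orbit_dist_decreasing a_cv).
  assert (l_ge0 : 0 <= l) by (apply (Un_cv_ge0 a); [intro; apply d_ge0 | exact a_cv]).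
  destruct (Rle_lt_or_eq_dec 0 l l_ge0) as [l_gt0 | <-]; [exfalso | exact a_cv].
  destruct (MK_contractive_ge1 l l_gt0) as [delta [delta_gt0 contr]].
  destruct (a_cv delta delta_gt0) as [N close]. specialize (close N (le_n N)).
  unfold R_dist in close. rewrite Rabs_right in close by (pose proof (above_l N); lra).
  assert (next_lt : a (S N) < l).
  { apply contr; [apply orbit_ge1 |].
    change (l <= a N < l + delta). pose proof (above_l N). lra. }
  pose proof (above_l (S N)). lra.
Qed.

End MeirKeeler.

Theorem lemma2 (X : Type) (d : X -> X -> R) (alpha : X -> X -> R) (T : X -> X)
  (Hd : is_metric d)
  (Halpha : forall x y, 0 <= alpha x y)
  (Hadm : alpha_admissible alpha T)
  (HMK : alpha_MK_contractive d alpha T)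
  (x y : X) (Hxy : alpha x y >= 1) :
  (forall n : nat, alpha (iterate T n x) (iterate T n y) >= 1) /\
  (forall n : nat, d (iterate T (S n) x) (iterate T (S n) y)
                   <= d (iterate T n x) (iterate T n y)) /\
  Un_cv (fun n => d (iterate T n x) (iterate T n y)) 0.
Proof.
  destruct Hd as [d_ge0 [d_eq0 _]].
  pose proof (alpha_admissible_iterate alpha T Hadm x y Hxy) as orbit_ge1.
  split; [exact orbit_ge1 |]. split.
  - exact (orbit_dist_decreasing X d alpha T d_ge0 HMK d_eq0 x y orbit_ge1).
  - exact (orbit_dist_cv0 X d alpha T d_ge0 HMK d_eq0 x y orbit_ge1).
Qed.
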